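(* Let $(P,\lambda)$ be a marked poset which is strict and irredundant. For every $p\in P\setminus P^*$, the equation $x_p=0$ defines a facet of the marked chain polytope $\mathcal{C}(P,\lambda)$. Moreover, $0$ is a vertex of $\mathcal{C}(P,\lambda)$.
   Context: A marked poset $(P,\lambda)$ is a finite poset $(P,\preceq)$ together with an induced subposet $P^*\subseteq P$ of marked elements and an order-preserving marking $\lambda:P^*\to\mathbb{R}$; it is always assumed that all minimal and all maximal elements of $P$ lie in $P^*$. It is strict if $\lambda(a)<\lambda(b)$ whenever $a\prec b$ in $P^*$, and irredundant (regular) if for every covering relation $p\prec q$ in $P$ and all $a,b\in P^*$ with $a\preceq q$ and $p\preceq b$, one has $a=b$ or $\lambda(a)<\lambda(b)$. The marked chain polytope $\mathcal{C}(P,\lambda)$ is the set of all $x\in\mathbb{R}_{\ge0}^{P\setminus P^*}$ with $x_{p_1}+\dots+x_{p_k}\le\lambda(b)-\lambda(a)$ for every maximal chain $a\prec p_1\prec\cdots\prec p_k\prec b$ in $P$ with $a,b\in P^*$ and $p_1,\dots,p_k\in P\setminus P^*$. *)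

From HB Require Import structures.
From mathcomp Require Import all_boot all_order all_algebra.
Set Implicit Arguments. Unset Strict Implicit. Unset Printing Implicit Defensive.
Import Order.TTheory GRing.Theory Num.Theory.
Local Open Scope ring_scope.

Section Polyhedral.
Variables (R : realFieldType) (I : finType).

(* points y_0..y_(k-1), x0 are affinely independent around x0:
   the differences y_j - x0 are linearly independent *)
Definition lin_indep k (v : 'I_k -> I -> R) : Prop :=
  forall c : 'I_k -> R, (forall i, \sum_(j < k) c j * v j i = 0) -> forall j, c j = 0.

Definition affdim_ge (S : (I -> R) -> Prop) (d : nat) : Prop :=
  exists (x0 : I -> R) (y : 'I_d -> I -> R),
    [/\ S x0, forall j, S (y j) & lin_indep (fun j i => y j i - x0 i)].

Definition affdim (S : (I -> R) -> Prop) (d : nat) : Prop :=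
  affdim_ge S d /\ ~ affdim_ge S d.+1.

Definition is_face (C F : (I -> R) -> Prop) : Prop :=
  exists (c : I -> R) (c0 : R),
    (forall x, C x -> \sum_i c i * x i <= c0) /\
    (forall x, F x <-> (C x /\ \sum_i c i * x i = c0)).

Definition is_facet (C F : (I -> R) -> Prop) : Prop :=
  is_face C F /\ exists d, affdim C d.+1 /\ affdim F d.

Definition is_vertex (C : (I -> R) -> Prop) (v : I -> R) : Prop :=
  is_face C (fun x => x = v).

End Polyhedral.

Section Marked.
Variables (R : realFieldType) (disp : Order.disp_t) (T : finPOrderType disp).
Variables (Pstar : {set T}) (lam : T -> R).

Definition covers (p q : T) : bool :=
  (p < q)%O && [forall r : T, ~~ ((p < r)%O && (r < q)%O)].

Definition minimal (p : T) : Prop := forall q : T, (q <= p)%O -> q = p.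
Definition maximal (p : T) : Prop := forall q : T, (p <= q)%O -> q = p.

Definition marked_poset : Prop :=
  [/\ forall p, minimal p -> p \in Pstar,
      forall p, maximal p -> p \in Pstar &
      forall a b, a \in Pstar -> b \in Pstar -> (a <= b)%O -> lam a <= lam b].

Definition strict_marked : Prop :=
  forall a b, a \in Pstar -> b \in Pstar -> (a < b)%O -> lam a < lam b.

Definition irredundant : Prop :=
  forall p q, covers p q -> forall a b, a \in Pstar -> b \in Pstar ->
    (a <= q)%O -> (p <= b)%O -> a = b \/ lam a < lam b.

Definition unmarked := {p : T | p \notin Pstar}.

(* marked chain polytope C(P, lam) in R^(P \ P* ) ; saturated chains
   a ⋖ p1 ⋖ ... ⋖ pk ⋖ b with a, b marked and the p_i unmarked *)
Definition marked_chain_polytope (x : unmarked -> R) : Prop :=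
  (forall p, 0 <= x p) /\
  (forall (a b : T) (s : seq unmarked), a \in Pstar -> b \in Pstar ->
     path covers a (rcons (map val s) b) ->
     \sum_(p <- s) x p <= lam b - lam a).

End Marked.

Arguments marked_chain_polytope {R disp T} Pstar lam x.
Arguments unmarked {disp T} Pstar.
Arguments marked_poset {R disp T} Pstar lam.
Arguments strict_marked {R disp T} Pstar lam.
Arguments irredundant {R disp T} Pstar lam.
Arguments is_facet {R I} C F.
Arguments is_vertex {R I} C v.

From HB Require Import structures.
From mathcomp Require Import all_boot all_order all_algebra.
From Stdlib Require Import FunctionalExtensionality.
Set Implicit Arguments.
Unset Strict Implicit.
Unset Printing Implicit Defensive.
Import Order.TTheory GRing.Theory Num.Theory.
Local Open Scope ring_scope.

(* It gives a uniform gap e > 0 between the marks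
   of comparable marked elements, and since a saturated chain meets each
   unmarked element at most once, the polytope contains 0 and every point
   e * (unit vector).  A subset of the nonnegative orthant containing this
   simplex is full-dimensional, each coordinate hyperplane x_p = 0 cuts out a
   face containing the n - 1 remaining simplex points (a facet), and the
   functional -(sum of coordinates) exposes 0 as a vertex. *)

Section Polyhedral.
Variables (R : realFieldType) (I : finType).

Definition scaled_basis (e : R) (q : I) : I -> R :=
  fun i => if i == q then e else 0.

Lemma sum_scaled_basis_mul e q (x : I -> R) :
  \sum_i scaled_basis e q i * x i = e * x q.
Proof.
rewrite (bigD1 q) //= /scaled_basis eqxx big1 ?addr0 // => i /negbTE ->.
by rewrite mul0r.
Qed.

Lemma sum_scaled_basis_uniq_le (s : seq I) e q : 0 <= e -> uniq s ->
  \sum_(i <- s) scaled_basis e q i <= e.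
Proof.
move=> e_ge0 s_uniq; rewrite -big_mkcond big_const_seq.
by rewrite (count_uniq_mem q s_uniq); case: (q \in s); rewrite /= ?addr0.
Qed.

(* Vectors supported in J are the rows of a k x #|J| matrix, whose rank is at
   most #|J|. *)
Lemma lin_indep_card_supp k (v : 'I_k -> I -> R) (J : {set I}) :
  lin_indep v -> (forall j i, i \notin J -> v j i = 0) -> (k <= #|J|)%N.
Proof.
move=> v_indep v_supp; rewrite leqNgt; apply/negP => ltJk.
pose M : 'M[R]_(k, #|J|) := \matrix_(j, i) v j (enum_val i).
have : ~~ row_free M.
  by rewrite /row_free neq_ltn (leq_ltn_trans (rank_leq_col M)).
rewrite -kermx_eq0 => /rowV0Pn [u /sub_kermxP uM]; apply/negP; rewrite negbK.
have u0 : forall j, u 0 j = 0.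
  apply: v_indep => i; have [iJ | iNJ] := boolP (i \in J); last first.
    by apply: big1 => j _; rewrite v_supp // mulr0.
  have := congr1 (fun A : 'M_(1, #|J|) => A 0 (enum_rank_in iJ i)) uM.
  rewrite !mxE => uMi; rewrite -[RHS]uMi; apply: eq_bigr => j _.
  by rewrite mxE enum_rankK_in.
by apply/eqP/rowP => j; rewrite u0 mxE.
Qed.

Lemma affdim_ge_card_supp (S : (I -> R) -> Prop) (J : {set I}) k :
  (forall x, S x -> forall i, i \notin J -> x i = 0) ->
  affdim_ge S k -> (k <= #|J|)%N.
Proof.
move=> S_supp [x0 [y [Sx0 Sy y_indep]]].
apply: (lin_indep_card_supp y_indep) => j i iNJ.
by rewrite (S_supp _ (Sy j)) // (S_supp _ Sx0) // subr0.
Qed.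

Lemma affdim_ge_scaled_basis (S : (I -> R) -> Prop) (J : {set I}) e :
  e != 0 -> S (fun _ => 0) -> (forall q, q \in J -> S (scaled_basis e q)) ->
  affdim_ge S #|J|.
Proof.
move=> e_neq0 S0 S_basis.
exists (fun _ => 0), (fun j => scaled_basis e (enum_val j)).
split=> // [j | c c_sum j]; first exact/S_basis/enum_valP.
have := c_sum (enum_val j); rewrite (bigD1 j) //= big1 ?addr0.
  rewrite /scaled_basis eqxx subr0 => /eqP.
  by rewrite mulf_eq0 (negbTE e_neq0) orbF => /eqP.
move=> j' /negbTE j'Nj; rewrite /scaled_basis subr0.
by rewrite (inj_eq enum_val_inj) eq_sym j'Nj mulr0.
Qed.

Lemma affdim_scaled_basis (S : (I -> R) -> Prop) (J : {set I}) e :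
  e != 0 -> S (fun _ => 0) -> (forall q, q \in J -> S (scaled_basis e q)) ->
  (forall x, S x -> forall i, i \notin J -> x i = 0) -> affdim S #|J|.
Proof.
move=> e_neq0 S0 S_basis S_supp; split.
  exact: (affdim_ge_scaled_basis e_neq0 S0 S_basis).
by move/(affdim_ge_card_supp S_supp); rewrite ltnn.
Qed.

Section Orthant.
Variable C : (I -> R) -> Prop.
Hypothesis C_ge0 : forall x, C x -> forall i, 0 <= x i.
Hypothesis C0 : C (fun _ => 0).

Lemma is_face_coord p : is_face C (fun x => C x /\ x p = 0).
Proof.
exists (scaled_basis (-1) p), 0; split=> [x Cx | x].
  by rewrite sum_scaled_basis_mul mulN1r oppr_le0 C_ge0.
rewrite sum_scaled_basis_mul mulN1r.
split=> -[Cx xp0]; split=> //; first by rewrite xp0 oppr0.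
by apply: oppr_inj; rewrite xp0 oppr0.
Qed.

Lemma is_facet_coord e p : e != 0 -> (forall q, C (scaled_basis e q)) ->
  is_facet C (fun x => C x /\ x p = 0).
Proof.
move=> e_neq0 C_basis; split; first exact: is_face_coord.
exists #|[set~ p]|; split.
  have -> : #|[set~ p]|.+1 = #|[set: I]|.
    by rewrite cardsC1 cardsT prednK //; apply/card_gt0P; exists p.
  by apply: (affdim_scaled_basis e_neq0) => // x _ i; rewrite inE.
apply: (affdim_scaled_basis e_neq0) => [| q | x [_ xp0] i].
- by split.
- rewrite in_setC1 => qNp.
  by split; rewrite // /scaled_basis eq_sym (negbTE qNp).
- by rewrite in_setC1 negbK => /eqP ->.
Qed.

Lemma is_vertex0 : is_vertex C (fun _ => 0).
Proof.
exists (fun _ => -1), 0; split=> [x Cx | x].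
  under eq_bigr do rewrite mulN1r.
  by rewrite sumrN oppr_le0; apply: sumr_ge0 => i _; apply: C_ge0.
split=> [-> | [Cx]]; first by split; rewrite // big1 // => i _; rewrite mulr0.
under eq_bigr do rewrite mulN1r.
rewrite sumrN => /eqP; rewrite oppr_eq0 => /eqP /psumr_eq0P x0.
by apply: functional_extensionality => i; apply: x0 => // j _; apply: C_ge0.
Qed.

End Orthant.
End Polyhedral.

Section MarkedChainPolytope.
Variables (R : realFieldType) (disp : Order.disp_t) (T : finPOrderType disp).
Variables (Pstar : {set T}) (lam : T -> R).

Lemma path_covers_lt_uniq (a b : T) (s : seq (unmarked Pstar)) :
  path (@covers _ T) a (rcons (map val s) b) -> (a < b)%O /\ uniq s.
Proof.
move=> covers_path.
have lt_path : path <%O a (rcons (map val s) b).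
  by apply: sub_path covers_path => x y /andP [].
split.
  apply: (allP (order_path_min lt_trans lt_path)).
  by rewrite mem_rcons mem_head.
have := sorted_uniq lt_trans ltxx (path_sorted lt_path).
by rewrite rcons_uniq => /andP [_ /map_uniq].
Qed.

Lemma marked_chain_polytope_scaled_basis e q : 0 <= e ->
  (forall a b, a \in Pstar -> b \in Pstar -> (a < b)%O -> e <= lam b - lam a) ->
  marked_chain_polytope Pstar lam (scaled_basis e q).
Proof.
move=> e_ge0 e_gap; split=> [p | a b s a_marked b_marked].
  by rewrite /scaled_basis; case: eqP.
case/path_covers_lt_uniq => lt_ab s_uniq.
exact: le_trans (sum_scaled_basis_uniq_le q e_ge0 s_uniq) (e_gap _ _ _ _ lt_ab).
Qed.

Hypothesis strict : strict_marked Pstar lam.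

Lemma strict_marked_gap : exists2 e : R, 0 < e &
  forall a b, a \in Pstar -> b \in Pstar -> (a < b)%O -> e <= lam b - lam a.
Proof.
pose P (ab : T * T) := [&& ab.1 \in Pstar, ab.2 \in Pstar & (ab.1 < ab.2)%O].
exists (\big[Num.min/1]_(ab | P ab) (lam ab.2 - lam ab.1)).
  apply: lt_bigmin => // ab /and3P [a_marked b_marked lt_ab].
  by rewrite subr_gt0 strict.
move=> a b a_marked b_marked lt_ab.
by apply: (@bigmin_le_cond _ _ _ _ (a, b)); rewrite /P /= a_marked b_marked.
Qed.

Lemma marked_chain_polytope0 : marked_chain_polytope Pstar lam (fun _ => 0).
Proof.
split=> // a b s a_marked b_marked /path_covers_lt_uniq [lt_ab _].
by rewrite big1 // subr_ge0 ltW // strict.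
Qed.

End MarkedChainPolytope.

Theorem lemma4p3 (R : realFieldType) (disp : Order.disp_t)
  (T : finPOrderType disp) (Pstar : {set T}) (lam : T -> R) :
  marked_poset Pstar lam -> strict_marked Pstar lam -> irredundant Pstar lam ->
  (forall p : unmarked Pstar,
     is_facet (marked_chain_polytope Pstar lam)
              (fun x => marked_chain_polytope Pstar lam x /\ x p = 0)) /\
  is_vertex (marked_chain_polytope Pstar lam) (fun _ => 0).
Proof.
move=> _ strict _.
have C_ge0 x : marked_chain_polytope Pstar lam x -> forall p, 0 <= x p.
  by case.
have C0 := marked_chain_polytope0 strict.
have [e e_gt0 e_gap] := strict_marked_gap strict.
split; last exact: is_vertex0.
move=> p; apply: (is_facet_coord C_ge0 C0 p (lt0r_neq0 e_gt0)) => q.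
exact: marked_chain_polytope_scaled_basis (ltW e_gt0) e_gap.
Qed.
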